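(* Let $\mathbf p:\mathbb R^{n\times k}\to\mathbb R^n$ be a permutation equivariant polynomial map. Then there exists a polynomial $p:\mathbb R^{n\times k}\to\mathbb R$ that is invariant under all permutations of the last $n-1$ rows of $\mathbf X$ such that $\mathbf p=\lceil p\rceil$, i.e. $\mathbf p(\mathbf X)=(p(\mathbf X),p(\sigma\cdot\mathbf X),p(\sigma^2\cdot\mathbf X),\dots,p(\sigma^{n-1}\cdot\mathbf X))^T$ for all $\mathbf X$, where $\sigma\in S_n$ is the permutation with $\sigma^{-1}=(1\,2\,3\cdots n)$.
   Context: $\mathbf X=(\mathbf x_1,\dots,\mathbf x_n)^T\in\mathbb R^{n\times k}$; $S_n$ acts by $\sigma\cdot\mathbf X=(\mathbf x_{\sigma^{-1}(1)},\dots,\mathbf x_{\sigma^{-1}(n)})^T$, and on vectors in $\mathbb R^n$ by the same permutation of entries; $\mathbf p$ is permutation equivariant if $\mathbf p(\sigma\cdot\mathbf X)=\sigma\cdot\mathbf p(\mathbf X)$ for all $\sigma\in S_n$. *)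

From HB Require Import structures.
From mathcomp Require Import all_boot all_order all_algebra all_fingroup.
From mathcomp Require Import reals.
From mathcomp Require Import mpoly.
Set Implicit Arguments. Unset Strict Implicit. Unset Printing Implicit Defensive.
Import GRing.Theory.
Local Open Scope ring_scope.

Definition mxact (R : Type) (n k : nat) (s : 'S_n) (X : 'M[R]_(n, k)) : 'M[R]_(n, k) :=
  \matrix_(i < n, j < k) X (s^-1 i)%g j.

Definition vact (R : Type) (n : nat) (s : 'S_n) (v : 'rV[R]_n) : 'rV[R]_n :=
  \row_(i < n) v 0 (s^-1 i)%g.

Definition poly_fun (R : realType) (n k : nat) (f : 'M[R]_(n, k) -> R) : Prop :=
  exists q : {mpoly R[n * k]}, forall X, f X = q.@[fun i => mxvec X 0 i].

Definition poly_map (R : realType) (n k : nat) (p : 'M[R]_(n, k) -> 'rV[R]_n) : Prop :=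
  forall i : 'I_n, poly_fun (fun X => p X 0 i).

Definition perm_equivariant (R : Type) (n k : nat) (p : 'M[R]_(n, k) -> 'rV[R]_n) : Prop :=
  forall (s : 'S_n) X, p (mxact s X) = vact s (p X).

(* sigma in S_n with sigma^-1 = (1 2 ... n), i.e. sigma^-1(i) = i+1 mod n. *)
Definition cyc_inv (n : nat) : 'S_n := perm (@ordS_inj n).
Definition sigma_cyc (n : nat) : 'S_n := ((cyc_inv n)^-1)%g.

From HB Require Import structures.
From mathcomp Require Import all_boot all_order all_algebra all_fingroup.
From mathcomp Require Import reals.
From mathcomp Require Import mpoly.
Local Open Scope ring_scope.

(* The first coordinate q := p_1 works. By equivariance,
   p_i(X) = p_1(s . X) whenever s^-1(1) = i; taking s = sigma^(i-1) gives the
   cyclic form, and taking s fixing 1 shows that q is invariant under the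
   permutations of the last n-1 rows. *)

Lemma iter_ordS_ord0 (n m : nat) : val (iter m (@ordS n.+1) ord0) = (m %% n.+1)%N.
Proof.
elim: m => [|m IHm] /=; first by rewrite mod0n.
by rewrite IHm -addn1 modnDml addn1.
Qed.

Lemma cyc_invE (n : nat) (i : 'I_n) : cyc_inv n i = ordS i.
Proof. by rewrite /cyc_inv permE. Qed.

Lemma sigma_cyc_expV_ord0 (n : nat) (i : 'I_n.+1) :
  (((sigma_cyc n.+1) ^+ i)^-1)%g ord0 = i.
Proof.
rewrite /sigma_cyc expVgn invgK permX; apply: val_inj.
have -> : iter i (cyc_inv n.+1) ord0 = iter i (@ordS n.+1) ord0.
  by apply: eq_iter => j; rewrite cyc_invE.
by rewrite iter_ordS_ord0 modn_small.
Qed.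

Lemma perm_equivariant_coord (R : Type) (n k : nat) (p : 'M[R]_(n, k) -> 'rV[R]_n) :
  perm_equivariant p ->
  forall (s : 'S_n) (X : 'M[R]_(n, k)) (i : 'I_n),
    p (mxact s X) 0 i = p X 0 ((s^-1)%g i).
Proof. by move=> p_eq s X i; rewrite p_eq mxE. Qed.

Lemma permV_fixed (T : finType) (t : {perm T}) (x : T) : t x = x -> (t^-1)%g x = x.
Proof. by move=> tx; rewrite -{1}tx permK. Qed.

Theorem lemma1 (R : realType) (n k : nat) (p : 'M[R]_(n, k) -> 'rV[R]_n) :
  poly_map p -> perm_equivariant p ->
  exists q : 'M[R]_(n, k) -> R,
    [/\ poly_fun q,
        (forall (t : 'S_n) (X : 'M[R]_(n, k)),
            (forall i : 'I_n, nat_of_ord i = 0%N -> t i = i) ->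
            q (mxact t X) = q X)
      & forall X : 'M[R]_(n, k),
          p X = \row_(i < n) q (mxact ((sigma_cyc n) ^+ i)%g X)].
Proof.
case: n p => [|n] p p_poly p_eq.
  exists (fun _ => 0); split=> // [|X]; last by apply/rowP => -[].
  by exists 0 => X; rewrite meval0.
exists (fun X => p X 0 ord0); split=> [|t X t_fix0|X].
- exact: p_poly.
- by rewrite perm_equivariant_coord // permV_fixed //; apply: t_fix0.
- apply/rowP => i.
  by rewrite mxE perm_equivariant_coord // sigma_cyc_expV_ord0.
Qed.
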